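(* Let $n\ge4$, with the Laurent ring $L$ and the lexicographic monomial order $\preceq$ described in the context. Then, with brackets regarded as elements of $L$ via the embedding $G\subset L$ and leading monomials taken up to the sign of the coefficient, $$\mathrm{lm}_\preceq([\alpha_i,\alpha_j])=A_iA_{j-1}^{-1}C_{j-1}\quad(1\le i<j\le n),$$ and for $1\le i\le n$, $$\mathrm{lm}_\preceq([\alpha_i,\beta_m])=\begin{cases}A_iA_n^{-1}C_n & (m=1),\\ A_iB_{m-1}^{-1}D_{m-1} & (2\le m\le n-3),\\ A_i & (m=n-2).\end{cases}$$
   Context: Let $k$ be a field of characteristic zero. Symbols are pairs of independent indeterminates $\sigma=(\sigma_0,\sigma_1)$; the bracket is $[\sigma,\tau]:=\sigma_0\tau_1-\tau_0\sigma_1$. Fix $n\ge4$ and symbols $\alpha_1,\dots,\alpha_n,\beta_1,\dots,\beta_{n-2}$, and let $G$ be the $k$-algebra generated by all brackets of these symbols. Define $A_i=[\beta_{n-2},\alpha_i]$ ($1\le i\le n$), $B_i=[\beta_{n-2},\beta_i]$ ($1\le i\le n-3$), $C_i=[\alpha_i,\alpha_{i+1}]$ ($1\le i\le n-1$), $C_n=[\alpha_n,\beta_1]$, $D_i=[\beta_i,\beta_{i+1}]$ ($1\le i\le n-4$). (These are the Plücker coordinates of the sides and diagonals of the triangulation, by all diagonals through $\beta_{n-2}$, of a convex polygon with vertices $\alpha_1,\dots,\alpha_n,\beta_1,\dots,\beta_{n-2}$ in counterclockwise order.) These elements are algebraically independent, and by the Laurent phenomenon (Fomin–Zelevinsky)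 $G$ is contained in the Laurent polynomial ring $L=k[A_i,B_i,C_i,D_i,A_2^{-1},\dots,A_n^{-1},B_1^{-1},\dots,B_{n-4}^{-1}]$ (inside the fraction field). The monomial order $\preceq$ on Laurent monomials of $L$ is the lexicographic order on exponent vectors with variables ordered from largest to smallest as $(A_1,\dots,A_n,B_1,\dots,B_{n-3},C_1,\dots,C_n,D_1,\dots,D_{n-4})$; for nonzero $f\in L$, $\mathrm{lm}_\preceq(f)$ denotes the $\preceq$-largest Laurent monomial occurring in $f$ with nonzero coefficient. *)

From HB Require Import structures.
From mathcomp Require Import all_boot all_order all_algebra.
From mathcomp Require Import mpoly.
Unset Printing Implicit Defensive.
Import Order.TTheory GRing.Theory Num.Theory.
Local Open Scope ring_scope.

(* Symbols: alpha_1..alpha_n, beta_1..beta_{n-2}, i.e. 2n-2 symbols, numbered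
   0..2n-3 : alpha_i |-> i-1, beta_m |-> n+m-1.  Symbol s = (s_0, s_1) has its two
   coordinates as the independent indeterminates X_(2s), X_(2s+1) of the
   polynomial ring Rn k n := k[X_0, ..., X_(4n-5)]. *)
Definition Rn (k : fieldType) (n : nat) := {mpoly k[4 * n - 4]}.

Definition alpha (n i : nat) : nat := i.-1.
Definition beta (n m : nat) : nat := n + m.-1.

(* indeterminate number j (0 if out of range; never used out of range) *)
Definition mvar (k : fieldType) (n j : nat) : Rn k n :=
  match @insub nat (fun x => x < 4 * n - 4)%N _ j with
  | Some i => 'X_i | None => 0 end.

Definition coord (k : fieldType) (n s c : nat) : Rn k n := mvar k n (2 * s + c).

Definition bracket (k : fieldType) (n s t : nat) : Rn k n :=
  coord k n s 0 * coord k n t 1 - coord k n t 0 * coord k n s 1.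

(* The 4n-7 variables of L, in the order (largest to smallest)
   A_1..A_n, B_1..B_{n-3}, C_1..C_n, D_1..D_{n-4}, given as pairs of symbols
   whose bracket they are. *)
Definition cluster_pairs (n : nat) : seq (nat * nat) :=
  [seq (beta n (n - 2), alpha n i) | i <- iota 1 n] ++
  [seq (beta n (n - 2), beta n i) | i <- iota 1 (n - 3)] ++
  [seq (alpha n i, alpha n i.+1) | i <- iota 1 (n - 1)] ++
  [:: (alpha n n, beta n 1)] ++
  [seq (beta n i, beta n i.+1) | i <- iota 1 (n - 4)].

Definition NL (n : nat) : nat := 4 * n - 7.

Definition posA (n i : nat) : nat := i.-1.
Definition posB (n i : nat) : nat := n + i.-1.
Definition posC (n i : nat) : nat := n + (n - 3) + i.-1.
Definition posD (n i : nat) : nat := n + (n - 3) + n + i.-1.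

Definition cv (k : fieldType) (n : nat) (j : 'I_(NL n)) : Rn k n :=
  let p := nth (0, 0)%N (cluster_pairs n) j in bracket k n p.1 p.2.

(* variables allowed in the denominators of L: A_2..A_n, B_1..B_{n-4} *)
Definition invertible_pos (n j : nat) : bool :=
  ((1 <= j < n) || (n <= j < n + (n - 4)))%N.

(* A Laurent polynomial of L is represented as P / x^d with
   P : k[x_0..x_(4n-8)] and d an exponent vector supported on the invertible
   variables. *)
Definition inL (n : nat) (d : 'I_(NL n) -> nat) : Prop :=
  forall j, d j != 0%N -> invertible_pos n j.

(* P / x^d (with x_j := cv j) equals the element y of the fraction field
   (checked after clearing denominators in the domain Rn k n). *)
Definition represents (k : fieldType) (n : nat) (P : {mpoly k[NL n]})
    (d : 'I_(NL n) -> nat) (y : Rn k n) : Prop :=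
  mmap (@mpolyC _ k) (cv k n) P = y * \prod_(j < NL n) cv k n j ^+ d j.

(* lexicographic order on Laurent exponent vectors, variable 0 largest *)
Definition lex_le (N : nat) (a b : 'I_N -> int) : Prop :=
  (forall j, a j = b j) \/
  exists j : 'I_N, (forall i : 'I_N, (i < j)%N -> a i = b i) /\ a j < b j.

Definition lm_is (k : fieldType) (n : nat) (P : {mpoly k[NL n]})
    (d : 'I_(NL n) -> nat) (e : 'I_(NL n) -> int) : Prop :=
  (exists2 m : 'X_{1..NL n}, m \in msupp P & forall j, (m j)%:Z - (d j)%:Z = e j)
  /\ (forall m : 'X_{1..NL n}, m \in msupp P ->
        lex_le (NL n) (fun j => (m j)%:Z - (d j)%:Z) e).

Definition mono (n : nat) (l : seq (nat * int)) : 'I_(NL n) -> int :=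
  fun j => \sum_(p <- l | p.1 == val j) p.2.

Definition lm_statement (k : fieldType) (n : nat) (y : Rn k n)
    (e : 'I_(NL n) -> int) : Prop :=
  (exists (P : {mpoly k[NL n]}) (d : 'I_(NL n) -> nat),
      inL n d /\ represents k n P d y /\ lm_is k n P d e) /\
  (forall (P : {mpoly k[NL n]}) (d : 'I_(NL n) -> nat),
      inL n d -> represents k n P d y -> lm_is k n P d e).

From Pilot Require Import Defs.
From HB Require Import structures.
From mathcomp Require Import all_boot all_order all_algebra.
From mathcomp Require Import mpoly.
From mathcomp Require Import zify ring.
Import Order.TTheory GRing.Theory Num.Theory.
Local Open Scope ring_scope.

(* Number the symbols 0, ..., K with K = 2n-3: alpha_i is i-1, beta_m is
   n+m-1, and the apex beta_{n-2} is K.  The variables of L are then the K fan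
   brackets x_u = [K, u] (u < K; these are A_1..A_n, B_1..B_{n-3}) followed by
   the K-1 side brackets y_u = [u, u+1] (u + 1 < K; these are C_1..C_n,
   D_1..D_{n-4}).  For u < v < K, iterating the Plücker relation
     [K, v] [u, v+1] = [K, u] [v, v+1] + [K, v+1] [u, v] expresses
     [u, v] x_{u+1} ... x_{v-1} as a sum of v - u monomials; the last one is
     lexicographically largest, giving lm [u, v] = x_u x_{v-1}^-1 y_{v-1}.
     Also [u, K] = -x_u.
   - Uniqueness.  The variables of L are algebraically independent: a
     specialization of the coordinates maps distinct monomials in them to
     distinct monomials.  Hence any two representations P / x^d, P' / x^d' of
     the same element satisfy P x^d' = P' x^d and have the same leading
     monomial.
   - The theorem is the translation of these two facts to the indexing of the
     statement. *)

Definition mexp (N : nat) (d : 'I_N -> nat) : 'X_{1..N} := [multinom d i | i < N].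
Arguments mexp {N} d.

Lemma mexpD (N : nat) (d e : 'I_N -> nat) :
  (mexp d + mexp e)%MM = mexp (fun i => d i + e i)%N.
Proof. by apply/mnmP => i; rewrite mnmDE !mnmE. Qed.

Lemma msupp_shift {R : nzRingType} {N : nat} {P P' : {mpoly R[N]}}
    {a b m : 'X_{1..N}} :
  P * 'X_[a] = P' * 'X_[b] -> m \in msupp P ->
  exists2 m', m' \in msupp P' & forall j, (m j)%:Z - (b j)%:Z = (m' j)%:Z - (a j)%:Z.
Proof.
move=> PaP'b mP.
have : (a + m)%MM \in msupp (P' * 'X_[b]).
  by rewrite -PaP'b mcoeff_msupp mcoeffMX -mcoeff_msupp.
rewrite (perm_mem (msuppMX _ _)) => /mapP [m' m'P' am_bm'].
exists m' => // j; have := congr1 (fun x : 'X_{1..N} => x j) am_bm'.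
rewrite /= !mnmDE; lia.
Qed.

Lemma lex_le_eql (N : nat) (a a' b : 'I_N -> int) :
  a =1 a' -> lex_le N a b -> lex_le N a' b.
Proof.
move=> aa' [ab | [j [ab_lt ab_j]]]; first by left => j; rewrite -aa'.
by right; exists j; split=> [i /ab_lt|]; rewrite -aa'.
Qed.

Lemma lex_le_eqr (N : nat) (a b b' : 'I_N -> int) :
  b =1 b' -> lex_le N a b -> lex_le N a b'.
Proof.
move=> bb' [ab | [j [ab_lt ab_j]]]; first by left => j; rewrite -bb'.
by right; exists j; split=> [i /ab_lt|]; rewrite -bb'.
Qed.

Lemma cluster_pairsE (n : nat) : (4 <= n)%N ->
  cluster_pairs n = [seq ((2*n-3)%N, u) | u <- iota 0 (2*n-3)] ++
                    [seq (u, u.+1) | u <- iota 0 (2*n-4)].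
Proof.
move=> n4.
have iota_shift a m : iota a m = map (addn a) (iota 0 m) by rewrite -iotaDl addn0.
rewrite /cluster_pairs.
have -> : beta n (n-2) = (2*n-3)%N by rewrite /beta; lia.
rewrite /alpha /beta.
have -> : (2*n-3 = n + (n-3))%N by lia.
have -> : (2*n-4 = (n-1) + 1 + (n-4))%N by lia.
rewrite !iotaD !map_cat -!catA.
rewrite [iota 1 n]iota_shift [iota 1 (n-3)]iota_shift [iota 1 (n-1)]iota_shift.
rewrite [iota 1 (n-4)]iota_shift [iota (0 + n) _]iota_shift.
rewrite [iota (0 + (n-1) + 1) _]iota_shift -!map_comp.
congr (_ ++ _ ++ _ ++ _ ++ _); try by apply: eq_map => i /=; congr (_, _); lia.
by rewrite /=; congr [:: (_, _)]; lia.
Qed.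

Lemma cv_fan (k : fieldType) (n : nat) (j : 'I_(NL n)) :
  (4 <= n)%N -> (j < 2*n-3)%N -> cv k n j = bracket k n (2*n-3) j.
Proof.
move=> n4 lt_jK; rewrite /cv cluster_pairsE // nth_cat size_map size_iota lt_jK.
by rewrite (nth_map 0%N) ?size_iota // nth_iota.
Qed.

Lemma cv_side (k : fieldType) (n : nat) (j : 'I_(NL n)) :
  (4 <= n)%N -> (2*n-3 <= j)%N ->
  cv k n j = bracket k n (j - (2*n-3)) (j - (2*n-3)).+1.
Proof.
move=> n4 le_Kj; have := ltn_ord j; rewrite /NL => lt_jN.
rewrite /cv cluster_pairsE // nth_cat size_map size_iota ltnNge le_Kj /=.
by rewrite (nth_map 0%N) ?size_iota ?nth_iota //; move: (val j) le_Kj lt_jN; lia.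
Qed.

Lemma plucker (k : fieldType) (n a x y z : nat) :
  bracket k n a y * bracket k n x z =
  bracket k n a x * bracket k n y z + bracket k n a z * bracket k n x y.
Proof. rewrite /bracket; ring. Qed.

Section FanCluster.
Variables (k : fieldType) (n : nat).
Hypothesis n4 : (4 <= n)%N.
Local Notation N := (NL n).
Local Notation K := (2*n-3)%N.
Local Notation S := {mpoly k[N]}.
Local Notation evalL := (mmap (@mpolyC _ k) (cv k n)).

Definition mon (f : nat -> nat) : 'X_{1..N} := mexp (fun i : 'I_N => f i).
Definition delta (j i : nat) : nat := (i == j).

Lemma mon_ext (f g : nat -> nat) :
  (forall i, (i < N)%N -> f i = g i) -> mon f = mon g.
Proof. by move=> fg; apply/mnmP => i; rewrite !mnmE fg. Qed.

Lemma monD (f g : nat -> nat) : (mon f + mon g)%MM = mon (fun i => f i + g i)%N.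
Proof. exact: mexpD. Qed.

Lemma mon_eq_at (f g : nat -> nat) (i : nat) :
  mon f = mon g -> (i < N)%N -> f i = g i.
Proof.
move=> fg lt_iN; have := congr1 (fun m : 'X_{1..N} => m (Ordinal lt_iN)) fg.
by rewrite /= !mnmE.
Qed.

Lemma eval_mexp (d : 'I_N -> nat) :
  evalL 'X_[mexp d] = \prod_(j < N) cv k n j ^+ d j.
Proof. by rewrite mmapX /mmap1; apply: eq_bigr => j _; rewrite mnmE. Qed.

Lemma eval_delta (j : nat) (lt_jN : (j < N)%N) :
  evalL 'X_[mon (delta j)] = cv k n (Ordinal lt_jN).
Proof.
rewrite eval_mexp (bigD1 (Ordinal lt_jN)) //= /delta eqxx expr1 big1 ?mulr1 //.
by move=> i; rewrite -val_eqE /= => /negbTE ->.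
Qed.

Lemma eval_fan (u : nat) : (u < K)%N ->
  evalL 'X_[mon (delta u)] = bracket k n K u.
Proof.
move=> lt_uK; have lt_uN : (u < N)%N by rewrite /NL; lia.
by rewrite (eval_delta _ lt_uN) cv_fan.
Qed.

Lemma eval_side (u : nat) : (u.+1 < K)%N ->
  evalL 'X_[mon (delta (K + u))] = bracket k n u u.+1.
Proof.
move=> lt_uK; have lt_N : (K + u < N)%N by rewrite /NL; lia.
by rewrite (eval_delta _ lt_N) cv_side //= ?leq_addr // addKn.
Qed.

(* The Laurent expansion of [u, u+r] (u + r < K): with x_w = [K, w] and
   y_l = [l, l+1], its l-th term (l < r) is
   x_u ... x_{u+r} y_{u+l} / (x_{u+l} x_{u+l+1}), and its denominator is
   x_{u+1} ... x_{u+r-1}. *)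
Definition expansion_term (u r l i : nat) : nat :=
  (((u <= i <= u + r) && (i != u + l) && (i != u + l + 1)) + (i == K + u + l))%N.
Definition denominator (u r i : nat) : nat := (u < i < u + r)%N.
Definition expansion (u r : nat) : S := \sum_(l < r) 'X_[mon (expansion_term u r l)].

(* Passing from [u, v] to [u, v+1]: all old terms acquire the factor x_{v+1},
   and one new term x_u ... x_{v-1} y_v appears. *)
Lemma expansion_step (u r : nat) :
  expansion u r.+2 =
  expansion u r.+1 * 'X_[mon (delta (u + r.+2))] +
  'X_[mon (delta u)] * 'X_[mon (denominator u r.+1)] *
  'X_[mon (delta (K + (u + r.+1)))].
Proof.
rewrite /expansion big_ord_recr /= mulr_suml -!mpolyXD !monD; congr (_ + _).
  apply: eq_bigr => l _; rewrite -mpolyXD monD; congr 'X_[_].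
  by apply: mon_ext => i _; move: (ltn_ord l); rewrite /expansion_term /delta; lia.
by congr 'X_[_]; apply: mon_ext => i _; rewrite /expansion_term /denominator /delta; lia.
Qed.

Lemma eval_expansion (u r : nat) : (u + r.+1 < K)%N ->
  evalL (expansion u r.+1) = bracket k n u (u + r.+1) * evalL 'X_[mon (denominator u r.+1)].
Proof.
elim: r => [|r IH] lt_K.
  rewrite /expansion big_ord1 (@mon_ext _ (delta (K + u))); last first.
    by move=> i _; rewrite /expansion_term /delta /=; lia.
  rewrite (@mon_ext (denominator u 1) (fun _ => 0%N)); last first.
    by move=> i _; rewrite /denominator; lia.
  have -> : mon (fun _ => 0%N) = 0%MM by apply/mnmP => i; rewrite mnmE.
  by rewrite mpolyX0 rmorph1 mulr1 eval_side; [congr (bracket _ _ _ _); lia | lia].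
have -> : mon (denominator u r.+2) = (mon (denominator u r.+1) + mon (delta (u + r.+1)))%MM.
  by rewrite monD; apply: mon_ext => i _; rewrite /denominator /delta; lia.
rewrite expansion_step rmorphD !rmorphM /= IH; last by lia.
rewrite mpolyXD rmorphM /= eval_side ?(eval_fan (u + _)) ?eval_fan; try lia.
have -> : (u + r.+2 = (u + r.+1).+1)%N by lia.
set v := (u + r.+1)%N; set D := evalL 'X_[mon (denominator u r.+1)].
transitivity (D * (bracket k n K u * bracket k n v v.+1 +
                   bracket k n K v.+1 * bracket k n u v)); first ring.
by rewrite -plucker; ring.
Qed.

(* Reusing the indeterminates
   of S as fresh variables z_0, ..., z_{N-1}, specialize the apex to (0, -1)
   and every other symbol s to (z_s, z_s (z_K + ... + z_{K+s-1})).  Then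
   [K, u] |-> z_u and [u, u+1] |-> z_u z_{u+1} z_{K+u}, so distinct monomials
   in the variables of L go to distinct monomials in the z's. *)
Definition zvar (s : nat) : S := 'X_[mon (delta s)].

Definition spec_coord (s : nat) (c : bool) : S :=
  if s == K then (if c then -1 else 0)
  else if c then zvar s * \sum_(t < s) zvar (K + t) else zvar s.

Definition spec_var (i : 'I_(4*n-4)) : S := spec_coord i./2 (odd i).
Local Notation spec := (mmap (@mpolyC _ k) spec_var).

Lemma spec_coordE (s : nat) (c : bool) : (s <= K)%N ->
  spec (Defs.coord k n s c) = spec_coord s c.
Proof.
move=> le_sK; rewrite /Defs.coord /mvar insubT; first by case: c; lia.
move=> lt_var; rewrite mmapX mmap1U /spec_var /=.
by clear lt_var; case: c; rewrite /= ?addn0 ?addn1 mul2n /= ?doubleK ?uphalf_double odd_double.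
Qed.

Lemma spec_fan (u : nat) : (u < K)%N -> spec (bracket k n K u) = zvar u.
Proof.
move=> lt_uK; rewrite /bracket rmorphB !rmorphM /=.
rewrite (spec_coordE K false) ?(spec_coordE K true) ?(spec_coordE u false)
        ?(spec_coordE u true) /spec_coord; try lia.
have -> : (u == K) = false by lia.
by rewrite eqxx mul0r sub0r mulrN1 opprK.
Qed.

Lemma spec_side (u : nat) : (u.+1 < K)%N ->
  spec (bracket k n u u.+1) =
  'X_[mon (fun i => delta u i + delta u.+1 i + delta (K + u) i)%N].
Proof.
move=> lt_uK; rewrite /bracket rmorphB !rmorphM /=.
rewrite (spec_coordE u false) ?(spec_coordE u true) ?(spec_coordE u.+1 false)
        ?(spec_coordE u.+1 true) /spec_coord; try lia.
have -> : (u == K) = false by lia.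
have -> : (u.+1 == K) = false by lia.
rewrite big_ord_recr /= -!monD !mpolyXD /zvar; ring.
Qed.

Definition cluster_image (j i : nat) : nat :=
  (delta j i + (K <= j) * (delta (j - K) i + delta (j - K).+1 i))%N.

Lemma spec_cv (j : 'I_N) : spec (cv k n j) = 'X_[mon (cluster_image j)].
Proof.
have := ltn_ord j; rewrite /NL => lt_jN.
case: (ltnP j K) => [lt_jK | le_Kj].
  rewrite cv_fan // spec_fan //; congr 'X_[_]; apply: mon_ext => i _.
  by rewrite /cluster_image /delta; move: (val j) lt_jK lt_jN; lia.
rewrite cv_side // spec_side; last by move: (val j) le_Kj lt_jN; lia.
congr 'X_[_]; apply: mon_ext => i _.
by rewrite /cluster_image /delta; move: (val j) le_Kj lt_jN; lia.
Qed.

Definition image_exp (m : 'X_{1..N}) : 'X_{1..N} :=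
  (\sum_(j < N) mon (cluster_image j) *+ m j)%MM.

Lemma spec_eval (P : S) :
  spec (evalL P) = \sum_(m <- msupp P) P@_m *: 'X_[image_exp m].
Proof.
rewrite [evalL P]/mmap rmorph_sum /=; apply: eq_bigr => m _.
rewrite rmorphM /= mmapC /mmap1 rmorph_prod /= -mul_mpolyC; congr (_ * _).
rewrite (eq_bigr (fun j : 'I_N => 'X_[mon (cluster_image j)] ^+ m j)).
  by rewrite mprodXnE.
by move=> j _; rewrite rmorphXn /= spec_cv.
Qed.

(* The side variables (j >= K) contribute to coordinates below K only;
   hence the fan part of m is m itself above K, and image_exp is injective. *)
Definition side_contribution (m : 'X_{1..N}) (i : nat) : nat :=
  (\sum_(j < N) (K <= j) * (delta (j - K) i + delta (j - K).+1 i) * m j)%N.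

Lemma image_expE (m : 'X_{1..N}) (i : 'I_N) :
  image_exp m i = (m i + side_contribution m i)%N.
Proof.
rewrite mnm_sumE /side_contribution.
rewrite (bigD1 i) //= [in RHS](bigD1 i) //= mulmnE mnmE /cluster_image /delta eqxx.
rewrite mulnDl mul1n -addnA; congr (_ + (_ + _))%N.
apply: eq_bigr => j ji; rewrite mulmnE mnmE.
by have /negbTE -> : val i != val j by rewrite val_eqE eq_sym.
Qed.

Lemma side_contribution_top (m : 'X_{1..N}) (i : 'I_N) :
  (K <= i)%N -> side_contribution m i = 0%N.
Proof.
move=> le_Ki; rewrite /side_contribution big1 // => j _.
have := ltn_ord j; rewrite /NL /delta => lt_jN.
suff -> : ((K <= j) * ((i == j - K :> nat) + (i == (j - K).+1 :> nat)) = 0)%N by [].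
by move: (nat_of_ord j) (nat_of_ord i) le_Ki lt_jN; lia.
Qed.

Lemma side_contribution_eq (m m' : 'X_{1..N}) (i : nat) :
  (forall j : 'I_N, (K <= j)%N -> m j = m' j) ->
  side_contribution m i = side_contribution m' i.
Proof.
move=> mm'; apply: eq_bigr => j _.
by case: (leqP K j) => [/mm' -> | _]; rewrite ?mul0n.
Qed.

Lemma image_exp_inj : injective image_exp.
Proof.
move=> m m' mm'.
have image_at i : image_exp m i = image_exp m' i by rewrite mm'.
have top (j : 'I_N) : (K <= j)%N -> m j = m' j.
  by move=> le_Kj; have := image_at j; rewrite !image_expE !side_contribution_top ?addn0.
apply/mnmP => i; have := image_at i.
by rewrite !image_expE (side_contribution_eq _ _ i top); apply: addIn.
Qed.

Lemma spec_eval_coef (P : S) (m : 'X_{1..N}) : (spec (evalL P))@_(image_exp m) = P@_m.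
Proof.
rewrite spec_eval raddf_sum [in RHS](mpolyE P) raddf_sum /=.
by apply: eq_bigr => m' _; rewrite !mcoeffZ !mcoeffX (inj_eq image_exp_inj).
Qed.

Lemma evalL_inj : injective evalL.
Proof.
move=> P Q PQ; have evalPQ : evalL (P - Q) = 0 by rewrite rmorphB /= PQ subrr.
apply/eqP; rewrite -subr_eq0; apply/eqP/mpolyP => m.
by rewrite -spec_eval_coef evalPQ rmorph0 !mcoeff0.
Qed.

Lemma represents_cross {P P' : S} {d d' : 'I_N -> nat} {y : Rn k n} :
  represents k n P d y -> represents k n P' d' y ->
  P * 'X_[mexp d'] = P' * 'X_[mexp d].
Proof.
rewrite /represents => Py P'y; apply: evalL_inj.
by rewrite !rmorphM /= !eval_mexp Py P'y mulrAC.
Qed.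

Lemma lm_is_cross {P P' : S} {d d' : 'I_N -> nat} {e : 'I_N -> int} :
  P * 'X_[mexp d'] = P' * 'X_[mexp d] -> lm_is k n P d e -> lm_is k n P' d' e.
Proof.
move=> PP' [[m mP me] m_max]; split.
  have [m' m'P' mm'] := msupp_shift PP' mP.
  by exists m' => // j; rewrite -me; move: (mm' j); rewrite !mnmE; lia.
move=> m' m'P'; have [m2 m2P m2m'] := msupp_shift (esym PP') m'P'.
apply: lex_le_eql (m_max m2 m2P) => j.
by move: (m2m' j); rewrite !mnmE; lia.
Qed.

Lemma lm_statement_of (P : S) (d : 'I_N -> nat) (y : Rn k n) (e : 'I_N -> int) :
  inL n d -> represents k n P d y -> lm_is k n P d e -> lm_statement k n y e.
Proof.
move=> dL Py lmP; split; first by exists P, d.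
by move=> P' d' _ P'y; apply: lm_is_cross (represents_cross Py P'y) lmP.
Qed.

Lemma lm_is_eqr {P : S} {d : 'I_N -> nat} {e e' : 'I_N -> int} :
  e =1 e' -> lm_is k n P d e -> lm_is k n P d e'.
Proof.
move=> ee' [[m mP me] m_max]; split; first by exists m => // j; rewrite -ee'.
by move=> m' /m_max; apply: lex_le_eqr.
Qed.

Lemma expansion_supp (u r : nat) (m : 'X_{1..N}) :
  m \in msupp (expansion u r) -> exists l : 'I_r, m = mon (expansion_term u r l).
Proof.
rewrite mcoeff_msupp /expansion raddf_sum /= => nz.
case: (pickP (fun l : 'I_r => mon (expansion_term u r l) == m)) => [l /eqP <-|none].
  by exists l.
by move: nz; rewrite big1 ?eqxx // => l _; rewrite mcoeffX none.
Qed.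

(* The last term (l = r-1) survives: it differs from the other terms at
   the position of x_{u+l}. *)
Lemma expansion_last_supp (u r : nat) : (u + r.+1 < K)%N ->
  mon (expansion_term u r.+1 r) \in msupp (expansion u r.+1).
Proof.
move=> lt_K; rewrite mcoeff_msupp /expansion raddf_sum big_ord_recr /=.
rewrite mcoeffX eqxx big1 ?add0r ?oner_neq0 // => l _; rewrite mcoeffX.
have lt_N : (u + l < N)%N by move: (ltn_ord l); rewrite /NL; lia.
case: eqP => // /mon_eq_at /(_ lt_N).
by move: (ltn_ord l); rewrite /expansion_term; lia.
Qed.

(* The last term is lexicographically largest: compared with term l < r-1,
   both agree before x_{u+l}, which occurs only in the last term. *)
Lemma lm_expansion (u r : nat) : (u + r.+1 < K)%N ->
  lm_is k n (expansion u r.+1) (fun j => denominator u r.+1 j)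
    (fun j => (expansion_term u r.+1 r j)%:Z - (denominator u r.+1 j)%:Z).
Proof.
move=> lt_K; split.
  by exists (mon (expansion_term u r.+1 r)); [apply: expansion_last_supp | move=> j; rewrite mnmE].
move=> m /expansion_supp [l ->].
have := ltn_ord l; rewrite ltnS leq_eqVlt => /orP [/eqP l_last | l_lt].
  by left => j; rewrite mnmE l_last.
have lt_N : (u + l < N)%N by rewrite /NL; lia.
right; exists (Ordinal lt_N); split => [i /= lt_i|].
  by rewrite mnmE /expansion_term /denominator; move: (nat_of_ord i) lt_i; lia.
by rewrite mnmE /= /expansion_term /denominator; lia.
Qed.

Lemma lm_bracket (u v : nat) : (u < v)%N -> (v < K)%N ->
  lm_statement k n (bracket k n u v)
    (mono n [:: (u, 1); (v.-1, -1); ((K + v.-1)%N, 1)]).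
Proof.
move=> lt_uv lt_vK; have [r def_v] : exists r, v = (u + r.+1)%N.
  by exists (v - u - 1)%N; lia.
subst v.
apply: (lm_statement_of (expansion u r.+1) (fun j => denominator u r.+1 j)).
- move=> j; rewrite /denominator /invertible_pos.
  by move: (nat_of_ord j) (ltn_ord j); rewrite /NL; lia.
- by rewrite /represents eval_expansion // /mon eval_mexp.
apply: lm_is_eqr (lm_expansion _ _ lt_vK) => j.
rewrite /mono !big_cons big_nil /= /expansion_term /denominator addnS /=.
move: (nat_of_ord j) (ltn_ord j); rewrite /NL => x lt_xN.
by case: (eqVneq u x); case: (eqVneq (u + r)%N x); case: (eqVneq (K + (u + r))%N x); lia.
Qed.

(* ... and lm [u, K] = x_u, since [u, K] = -[K, u] is itself a variable. *)
Lemma lm_bracket_apex (u : nat) : (u < K)%N ->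
  lm_statement k n (bracket k n u K) (mono n [:: (u, 1)]).
Proof.
move=> lt_uK; set xu := mon (delta u).
have exp_xu j : (xu j)%:Z - 0%:Z = mono n [:: (u, 1)] j.
  by rewrite /mono !big_cons big_nil /= mnmE /delta subr0 eq_sym; case: eqP.
apply: (lm_statement_of (- 'X_[xu]) (fun _ => 0%N)).
- by move=> j; rewrite eqxx.
- rewrite /represents rmorphN /= /xu eval_fan // big1 => [|j _]; last by rewrite expr0.
  by rewrite mulr1 /bracket; ring.
have supp_xu m : (m \in msupp (- 'X_[xu] : S)) = (m == xu).
  by rewrite (perm_mem (msuppN _)) msuppX mem_seq1.
split; first by exists xu; rewrite ?supp_xu.
by move=> m; rewrite supp_xu => /eqP ->; left.
Qed.

End FanCluster.

Theorem lemma5p4 (k : fieldType) (n : nat) :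
  [pchar k] =i pred0 -> (4 <= n)%N ->
  (forall i j : nat, (1 <= i)%N -> (i < j)%N -> (j <= n)%N ->
     lm_statement k n (bracket k n (alpha n i) (alpha n j))
       (mono n [:: (posA n i, 1); (posA n j.-1, -1); (posC n j.-1, 1)])) /\
  (forall i : nat, (1 <= i <= n)%N ->
     lm_statement k n (bracket k n (alpha n i) (beta n 1))
       (mono n [:: (posA n i, 1); (posA n n, -1); (posC n n, 1)])) /\
  (forall i m : nat, (1 <= i <= n)%N -> (2 <= m <= n - 3)%N ->
     lm_statement k n (bracket k n (alpha n i) (beta n m))
       (mono n [:: (posA n i, 1); (posB n m.-1, -1); (posD n m.-1, 1)])) /\
  (forall i : nat, (1 <= i <= n)%N ->
     lm_statement k n (bracket k n (alpha n i) (beta n (n - 2)))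
       (mono n [:: (posA n i, 1)])).
Proof.
move=> _ n4; split; [|split; [|split]].
- move=> i j i_ge1 lt_ij le_jn.
  have -> : posC n j.-1 = (2*n-3 + (j.-1).-1)%N by rewrite /posC; lia.
  by rewrite /alpha /posA; apply: lm_bracket => //; lia.
- move=> i /andP [i_ge1 le_in].
  have -> : posC n n = (2*n-3 + n.-1)%N by rewrite /posC; lia.
  have -> : beta n 1 = n by rewrite /beta addn0.
  by rewrite /alpha /posA; apply: (lm_bracket k n n4 i.-1 n); lia.
- move=> i m /andP [i_ge1 le_in] /andP [m_ge2 le_m].
  have -> : posD n m.-1 = (2*n-3 + (n + m.-1).-1)%N by rewrite /posD; lia.
  have -> : posB n m.-1 = (n + m.-1).-1 by rewrite /posB; lia.
  by rewrite /alpha; apply: lm_bracket => //; rewrite /beta; lia.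
- move=> i /andP [i_ge1 le_in].
  have -> : beta n (n - 2) = (2*n-3)%N by rewrite /beta; lia.
  by rewrite /alpha /posA; apply: lm_bracket_apex => //; lia.
Qed.
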